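(* Let $R\in\mathbb R$ and let $f:[0,R)\to\mathbb R$ be continuously differentiable and satisfy (h1) $f(0)>0$, $f'(0)=-1$; (h2) $f'$ is strictly increasing and convex; (h3) $f(t)<0$ for some $t\in(0,R)$. Let $\kappa:=\sup_{0<t<R}\frac{-f(t)}{t}$, $\lambda:=\sup\{t\in[0,R):\kappa+f'(t)<0\}$, $\Theta:=\kappa/(2-\kappa)$, and \[\Omega:=\{(t,\varepsilon)\in\mathbb R^2:0\le t<\lambda,\ 0\le\varepsilon\le\kappa t,\ 0<f(t)+\varepsilon\}.\] If $0\le\theta\le\Theta$, $(t,\varepsilon)\in\Omega$, and \[t_+=t-(1+\theta)\frac{f(t)+\varepsilon}{f'(t)},\qquad \varepsilon_+=\varepsilon+2\theta(f(t)+\varepsilon),\] then $(t_+,\varepsilon_+)\in\Omega$, $t<t_+$, $\varepsilon\le\varepsilon_+$, and \[f(t_+)+\varepsilon_+<\Big(\frac{1+\theta^2}{2}\Big)(f(t)+\varepsilon).\] *)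

From Stdlib Require Import Reals.
From Coquelicot Require Import Coquelicot.
Open Scope R_scope.

(* df is the derivative of f on [0,R), derivatives taken within [0,R)
   (so at t = 0 it is the right derivative). *)
Definition has_derivative_on_0R (f df : R -> R) (R0 : R) : Prop :=
  forall t, 0 <= t < R0 ->
    filterlim (fun s => (f s - f t) / (s - t))
      (within (fun s => 0 <= s < R0 /\ s <> t) (locally t)) (locally (df t)).

Definition continuous_on_0R (df : R -> R) (R0 : R) : Prop :=
  forall t, 0 <= t < R0 ->
    filterlim df (within (fun s => 0 <= s < R0) (locally t)) (locally (df t)).

Definition C1_on_0R (f df : R -> R) (R0 : R) : Prop :=
  has_derivative_on_0R f df R0 /\ continuous_on_0R df R0.

Definition strictly_increasing_on_0R (g : R -> R) (R0 : R) : Prop :=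
  forall s t, 0 <= s -> s < t -> t < R0 -> g s < g t.

Definition convex_on_0R (g : R -> R) (R0 : R) : Prop :=
  forall s t a, 0 <= s < R0 -> 0 <= t < R0 -> 0 <= a <= 1 ->
    g (a * s + (1 - a) * t) <= a * g s + (1 - a) * g t.

Definition Omega (f : R -> R) (kappa lambda t eps : R) : Prop :=
  0 <= t < lambda /\ 0 <= eps <= kappa * t /\ 0 < f t + eps.

From Stdlib Require Import Reals Lra.
From Coquelicot Require Import Coquelicot.
Open Scope R_scope.

(* Write [g = f t + eps] and [s = (1 + theta) g / - df t], so that [tp = t + s].
   Since [f + kappa * id] is convex, nonnegative on (0,R) and, by maximality of
   [kappa], not bounded below by a positive constant, its tangents at points left of
   [lambda] vanish before [lambda]; so the line through [(t, g)] with slope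
   [kappa + df t] vanishes at some [v < lambda], and the damping [theta <= kappa / (2 - kappa)]
   keeps [t + s <= v].  On [[t, v]] the convex [df] lies below its chord, hence
   [f (t + s) - f t - df t * s <= L s^2 / 2] with [L] the chord slope, and comparing
   [L] with the slope of the line gives a residual below [(1 - theta)^2 g / 2].
   Finally [f tp + ep] is [theta g] plus that residual. *)

Lemma MVT_right_continuous (phi dphi : R -> R) (a b : R) :
  a < b ->
  (forall x, a < x <= b -> is_derive phi x (dphi x)) ->
  filterlim phi (at_right a) (locally (phi a)) ->
  exists c, a <= c <= b /\ phi b - phi a = dphi c * (b - a).
Proof.
  intros Hab Hder Hright.
  assert (Hcont : forall x, a < x <= b -> continuity_pt phi x).
  { intros x Hx. apply continuity_pt_filterlim.
    apply (@ex_derive_continuous R_AbsRing R_NormedModule). eexists. now apply Hder. }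
  destruct (C0_extension_left phi (phi a) a b Hab) as [g [Hg [Hgphi Hga]]].
  - intros c Hc. apply continuity_pt_filterlim, Hcont. lra.
  - exact Hright.
  - assert (Hloc : forall x, a < x -> locally x (fun y => phi y = g y)).
    { intros x Hx. assert (Hxa : 0 < x - a) by lra.
      exists (mkposreal _ Hxa). intros y Hy.
      change (Rabs (y - x) < x - a) in Hy. apply Rabs_def2 in Hy.
      symmetry. apply Hgphi. lra. }
    destruct (MVT_gen g a b dphi) as [c [Hc Hmvt]];
      rewrite Rmin_left, Rmax_right in * by lra.
    + intros x Hx. apply (is_derive_ext_loc phi); [apply Hloc | apply Hder]; lra.
    + intros x Hx. destruct (Req_dec x b) as [-> | Hxb].
      * apply (continuity_pt_ext_loc phi); [apply Hloc | apply Hcont]; lra.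
      * apply continuity_pt_filterlim, Hg. lra.
    + exists c. split; [exact Hc |].
      now rewrite Hgphi, Hga in Hmvt by lra.
Qed.

Section DerivativeOn0R.

Context {f df : R -> R} {R0 : R}.
Hypothesis hD : has_derivative_on_0R f df R0.

Lemma has_derivative_on_0R_is_derive x : 0 < x < R0 -> is_derive f x (df x).
Proof.
  intros Hx. apply is_derive_Reals. intros eps Heps.
  pose proof (hD x ltac:(lra)) as Hlim.
  apply filterlim_locally with (eps := mkposreal eps Heps) in Hlim.
  destruct Hlim as [d Hd].
  assert (Hpos : 0 < Rmin d (Rmin x (R0 - x))).
  { destruct d as [d dpos]; simpl. repeat apply Rmin_pos; lra. }
  exists (mkposreal _ Hpos). simpl. intros h Hh0 Hh.
  pose proof (Rmin_l d (Rmin x (R0 - x))). pose proof (Rmin_r d (Rmin x (R0 - x))).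
  pose proof (Rmin_l x (R0 - x)). pose proof (Rmin_r x (R0 - x)).
  assert (Hball : ball x d (x + h)).
  { change (Rabs (x + h - x) < d). replace (x + h - x) with h by ring. lra. }
  apply Rabs_def2 in Hh.
  specialize (Hd (x + h) Hball ltac:(split; [lra | intro; apply Hh0; lra])).
  change (Rabs ((f (x + h) - f x) / (x + h - x) - df x) < eps) in Hd.
  now replace (x + h - x) with h in Hd by ring.
Qed.

Lemma has_derivative_on_0R_right_continuous a :
  0 <= a < R0 -> filterlim f (at_right a) (locally (f a)).
Proof.
  intros Ha. apply filterlim_locally. intros eps.
  pose proof (hD a Ha) as Hlim.
  apply filterlim_locally with (eps := mkposreal 1 Rlt_0_1) in Hlim.
  destruct Hlim as [d Hd].
  set (K := Rabs (df a) + 1).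
  assert (HK : 0 < K) by (pose proof (Rabs_pos (df a)); unfold K; lra).
  assert (Hpos : 0 < Rmin d (Rmin (R0 - a) (eps / K))).
  { destruct d as [d dpos], eps as [e epos]; simpl.
    repeat apply Rmin_pos; try lra. now apply Rdiv_lt_0_compat. }
  exists (mkposreal _ Hpos). simpl. intros x Hx Hax.
  change (Rabs (x - a) < Rmin d (Rmin (R0 - a) (eps / K))) in Hx.
  rewrite Rabs_pos_eq in Hx by lra.
  pose proof (Rmin_l d (Rmin (R0 - a) (eps / K))).
  pose proof (Rmin_r d (Rmin (R0 - a) (eps / K))).
  pose proof (Rmin_l (R0 - a) (eps / K)). pose proof (Rmin_r (R0 - a) (eps / K)).
  assert (Hball : ball a d x) by (change (Rabs (x - a) < d); rewrite Rabs_pos_eq; lra).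
  specialize (Hd x Hball ltac:(split; lra)).
  change (Rabs ((f x - f a) / (x - a) - df a) < 1) in Hd.
  change (Rabs (f x - f a) < eps).
  set (q := (f x - f a) / (x - a)) in Hd.
  replace (f x - f a) with (q * (x - a)) by (unfold q; field; lra).
  rewrite Rabs_mult, (Rabs_pos_eq (x - a)) by lra.
  assert (Hq : Rabs q <= K) by (pose proof (Rabs_triang_inv q (df a)); unfold K; lra).
  apply Rle_lt_trans with (K * (x - a)); [apply Rmult_le_compat_r; lra |].
  replace (pos eps) with (K * (eps / K)) by (field; lra).
  apply Rmult_lt_compat_l; lra.
Qed.

Lemma MVT_sub_on_0R (p dp : R -> R) a b :
  (forall x, is_derive p x (dp x)) -> 0 <= a < b -> b < R0 ->
  exists c, a <= c <= b /\
    (f b - p b) - (f a - p a) = (df c - dp c) * (b - a).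
Proof.
  intros Hp Hab Hb.
  apply (MVT_right_continuous (fun x => f x - p x) (fun x => df x - dp x)); [lra | |].
  - intros x Hx. apply (is_derive_minus f p).
    + apply has_derivative_on_0R_is_derive. lra.
    + apply Hp.
  - apply (filterlim_comp_2 (G := locally (f a)) (H := locally (opp (p a)))
      f (fun x => opp (p x)) plus).
    + apply has_derivative_on_0R_right_continuous. lra.
    + apply (filterlim_comp _ _ _ p opp _ (locally (p a))).
      * apply (filterlim_filter_le_1 _ (filter_le_within (F := locally a) _)).
        apply (@ex_derive_continuous R_AbsRing R_NormedModule). eexists. apply Hp.
      * apply (@filterlim_opp R_AbsRing R_NormedModule).
    + apply (@filterlim_plus R_AbsRing R_NormedModule).
Qed.

Lemma MVT_on_0R a b :
  0 <= a < b -> b < R0 -> exists c, a <= c <= b /\ f b - f a = df c * (b - a).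
Proof.
  intros Hab Hb.
  destruct (MVT_sub_on_0R (fun _ => 0) (fun _ => 0) a b) as [c [Hc Hmvt]];
    try assumption.
  - intros x. auto_derive; [exact I | reflexivity].
  - exists c. split; [exact Hc | lra].
Qed.

Hypothesis hmono : strictly_increasing_on_0R df R0.

Lemma df_le x y : 0 <= x -> x <= y -> y < R0 -> df x <= df y.
Proof.
  intros Hx Hxy Hy. destruct (Req_dec x y) as [-> | Hne]; [lra |].
  left. apply hmono; lra.
Qed.

Lemma tangent_le x u :
  0 <= x < R0 -> 0 <= u < R0 -> f x + df x * (u - x) <= f u.
Proof.
  intros Hx Hu. destruct (Rtotal_order x u) as [Hlt | [-> | Hgt]].
  - destruct (MVT_on_0R x u) as [c [Hc Hmvt]]; try lra.
    pose proof (df_le x c ltac:(lra) ltac:(lra) ltac:(lra)). nra.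
  - lra.
  - destruct (MVT_on_0R u x) as [c [Hc Hmvt]]; try lra.
    pose proof (df_le c x ltac:(lra) ltac:(lra) ltac:(lra)). nra.
Qed.

Lemma tangent_lt x u : 0 <= x -> x < u -> u < R0 -> f x + df x * (u - x) < f u.
Proof.
  intros Hx Hxu Hu. set (m := (x + u) / 2).
  pose proof (tangent_le x m ltac:(unfold m; lra) ltac:(unfold m; lra)).
  destruct (MVT_on_0R m u) as [c [Hc Hmvt]]; try (unfold m; lra).
  assert (df x < df c) by (apply hmono; unfold m in *; lra).
  assert (df x * (u - m) < df c * (u - m)) by (apply Rmult_lt_compat_r; unfold m; lra).
  replace (u - x) with ((m - x) + (u - m)) by ring. lra.
Qed.

Hypothesis hconv : convex_on_0R df R0.

Lemma df_le_chord t v c :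
  0 <= t -> t < v -> v < R0 -> t <= c <= v ->
  df c <= df t + (df v - df t) / (v - t) * (c - t).
Proof.
  intros Ht Htv Hv Hc. set (a := (c - t) / (v - t)).
  assert (Ha : 0 <= a <= 1).
  { unfold a. split.
    - apply Rdiv_le_0_compat; lra.
    - apply Rmult_le_reg_r with (v - t); [lra |]. field_simplify; lra. }
  pose proof (hconv v t a ltac:(lra) ltac:(lra) Ha) as Hconv.
  replace (a * v + (1 - a) * t) with c in Hconv by (unfold a; field; lra).
  replace (df t + (df v - df t) / (v - t) * (c - t))
    with (a * df v + (1 - a) * df t) by (unfold a; field; lra).
  exact Hconv.
Qed.

(* The chord bound on [df] integrates to a parabola above the tangent at [t]. *)
Lemma tangent_gap_le_chord t v u :
  0 <= t -> t < v -> v < R0 -> t <= u <= v ->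
  f u - f t - df t * (u - t) <= (df v - df t) / (v - t) / 2 * (u - t) ^ 2.
Proof.
  intros Ht Htv Hv Hu. set (L := (df v - df t) / (v - t)).
  destruct (Req_dec u t) as [-> | Hne]; [simpl; lra |].
  destruct (MVT_sub_on_0R (fun x => df t * (x - t) + L / 2 * (x - t) ^ 2)
              (fun x => df t + L * (x - t)) t u) as [c [Hc Hmvt]]; try lra.
  - intros x. auto_derive; [exact I | field].
  - pose proof (df_le_chord t v c Ht Htv Hv ltac:(lra)) as Hchord. fold L in Hchord.
    assert ((df c - (df t + L * (c - t))) * (u - t) <= 0)
      by (apply Rmult_le_0_r; lra).
    replace (t - t) with 0 in Hmvt by ring. simpl in *. lra.
Qed.

End DerivativeOn0R.

Section SupremumBounds.

Context {f df : R -> R} {R0 kappa : R}.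
Hypothesis hkappa : is_lub (fun y => exists t, 0 < t < R0 /\ y = - f t / t) kappa.

Lemma f_add_kappa_nonneg u : 0 < u < R0 -> 0 <= f u + kappa * u.
Proof.
  intros Hu.
  assert (Hle : - f u / u <= kappa) by (apply (proj1 hkappa); exists u; split; auto).
  apply Rmult_le_compat_r with (r := u) in Hle; [| lra].
  replace (- f u / u * u) with (- f u) in Hle by (field; lra). lra.
Qed.

Lemma kappa_pos : (exists t, 0 < t < R0 /\ f t < 0) -> 0 < kappa.
Proof.
  intros [t [Ht Hft]]. pose proof (f_add_kappa_nonneg t Ht). nra.
Qed.

Lemma kappa_le_of_bound k : (forall u, 0 < u < R0 -> - f u <= k * u) -> kappa <= k.
Proof.
  intros Hk. apply (proj2 hkappa). intros y [u [Hu ->]].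
  apply Rmult_le_reg_r with u; [lra |].
  replace (- f u / u * u) with (- f u) by (field; lra). now apply Hk.
Qed.

Lemma lower_bound_f_add_kappa_nonpos m :
  0 < R0 -> (forall u, 0 < u < R0 -> m <= f u + kappa * u) -> m <= 0.
Proof.
  intros HR0 Hm. apply Rnot_lt_le. intros Hmpos.
  assert (kappa <= kappa - m / R0); [| pose proof (Rdiv_lt_0_compat m R0); lra].
  apply kappa_le_of_bound. intros u Hu.
  assert (m / R0 * u <= m).
  { apply Rmult_le_reg_r with R0; [lra |].
    replace (m / R0 * u * R0) with (m * u) by (field; lra). nra. }
  pose proof (Hm u Hu). nra.
Qed.

Hypothesis hD : has_derivative_on_0R f df R0.
Hypothesis hmono : strictly_increasing_on_0R df R0.

Context {lambda : R}.
Hypothesis hlambda : is_lub (fun s => 0 <= s < R0 /\ kappa + df s < 0) lambda.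

Lemma lambda_le_R0 : lambda <= R0.
Proof. apply (proj2 hlambda). intros s [[_ Hs] _]. lra. Qed.

Lemma kappa_add_df_neg x : 0 <= x < lambda -> kappa + df x < 0.
Proof.
  intros Hx. apply Rnot_le_lt. intros Hnonneg.
  assert (lambda <= x); [| lra].
  apply (proj2 hlambda). intros y [Hy Hneg]. apply Rnot_lt_le. intros Hxy.
  pose proof (df_le hmono x y ltac:(lra) ltac:(lra) ltac:(lra)). lra.
Qed.

Hypothesis hcont : continuous_on_0R df R0.

Lemma kappa_add_df_lambda_nonneg : 0 <= lambda < R0 -> 0 <= kappa + df lambda.
Proof.
  intros Hl. apply Rnot_lt_le. intros Hneg.
  assert (Heps : 0 < - (kappa + df lambda)) by lra.
  pose proof (hcont lambda Hl) as Hlim.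
  apply filterlim_locally with (eps := mkposreal _ Heps) in Hlim.
  destruct Hlim as [d Hd].
  assert (Hpos : 0 < Rmin d (R0 - lambda)) by (destruct d; simpl; apply Rmin_pos; lra).
  pose proof (Rmin_l d (R0 - lambda)). pose proof (Rmin_r d (R0 - lambda)).
  set (s := lambda + Rmin d (R0 - lambda) / 2) in *.
  assert (Hball : ball lambda d s)
    by (change (Rabs (s - lambda) < d); rewrite Rabs_pos_eq; unfold s; lra).
  specialize (Hd s Hball ltac:(unfold s; lra)).
  change (Rabs (df s - df lambda) < - (kappa + df lambda)) in Hd.
  apply Rabs_def2 in Hd.
  assert (s <= lambda) by (apply (proj1 hlambda); split; [unfold s; lra | lra]).
  unfold s in *. lra.
Qed.

(* [f + kappa * id] is convex, decreasing on [0,lambda) and nondecreasing after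
   [lambda], so its tangent line at [t'] evaluated at [lambda] bounds it below. *)
Lemma f_add_kappa_ge_tangent_at_lambda t' u :
  0 <= t' < lambda -> 0 < u < R0 ->
  f t' + kappa * t' + (kappa + df t') * (lambda - t') <= f u + kappa * u.
Proof.
  intros Ht' Hu. pose proof (kappa_add_df_neg t' Ht') as Hneg.
  pose proof lambda_le_R0.
  assert (Htangent : forall w, 0 <= w <= lambda -> w < R0 ->
    f t' + kappa * t' + (kappa + df t') * (lambda - t') <= f w + kappa * w).
  { intros w Hw HwR. pose proof (tangent_le hD hmono t' w ltac:(lra) ltac:(lra)).
    nra. }
  destruct (Rle_dec u lambda) as [Hul | Hul]; [apply Htangent; lra |].
  pose proof (kappa_add_df_lambda_nonneg ltac:(lra)).
  destruct (MVT_on_0R hD lambda u) as [c [Hc Hmvt]]; try lra.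
  pose proof (df_le hmono lambda c ltac:(lra) ltac:(lra) ltac:(lra)).
  pose proof (Htangent lambda ltac:(lra) ltac:(lra)).
  assert (0 <= (kappa + df c) * (u - lambda)) by (apply Rmult_le_pos; lra).
  replace ((kappa + df c) * (u - lambda))
    with (df c * (u - lambda) + kappa * u - kappa * lambda) in * by ring.
  lra.
Qed.

Lemma f_add_kappa_lt_before_lambda t :
  0 <= t < lambda -> f t + kappa * t < - (kappa + df t) * (lambda - t).
Proof.
  intros Ht. pose proof lambda_le_R0. set (t' := (t + lambda) / 2).
  assert (Hm : f t' + kappa * t' + (kappa + df t') * (lambda - t') <= 0).
  { apply lower_bound_f_add_kappa_nonpos; [lra |].
    intros u Hu. apply f_add_kappa_ge_tangent_at_lambda; [unfold t'; lra | exact Hu]. }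
  pose proof (tangent_lt hD hmono t t' ltac:(lra) ltac:(unfold t'; lra)
                ltac:(unfold t'; lra)).
  pose proof (df_le hmono t t' ltac:(lra) ltac:(unfold t'; lra)
                ltac:(unfold t'; lra)).
  assert (0 <= (df t' - df t) * (lambda - t')) by (apply Rmult_le_pos; [lra | unfold t'; lra]).
  assert (Hsplit : (kappa + df t) * (lambda - t) = df t * (t' - t) + kappa * (t' - t)
                     + (kappa + df t') * (lambda - t') - (df t' - df t) * (lambda - t'))
    by (unfold t'; ring).
  lra.
Qed.

End SupremumBounds.

Lemma mul_two_sub_le_of_le_div kappa theta :
  0 <= theta <= kappa / (2 - kappa) -> theta * (2 - kappa) <= kappa.
Proof.
  (* For [kappa >= 2] the bound [kappa / (2 - kappa)] is nonpositive (junk [0] at [2]). *)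
  intros [Htheta Hle]. destruct (Rlt_le_dec kappa 2).
  - apply Rmult_le_compat_r with (r := 2 - kappa) in Hle; [| lra].
    replace (kappa / (2 - kappa) * (2 - kappa)) with kappa in Hle by (field; lra).
    exact Hle.
  - nra.
Qed.

Lemma damped_step_le kappa theta A B g :
  0 < B -> 0 <= g -> 0 <= theta -> theta * (2 - kappa) <= kappa ->
  A <= (1 - kappa) * B -> A * ((1 + theta) * g / B) <= (1 - theta) * g.
Proof.
  intros HB Hg Htheta Hk HA.
  assert (Hs : 0 <= (1 + theta) * g / B) by (apply Rdiv_le_0_compat; nra).
  apply Rle_trans with ((1 - kappa) * B * ((1 + theta) * g / B));
    [now apply Rmult_le_compat_r |].
  replace ((1 - kappa) * B * ((1 + theta) * g / B))
    with ((1 - kappa) * (1 + theta) * g) by (field; lra).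
  nra.
Qed.

Lemma parabola_bound_lt e L A s g c :
  0 < g -> 0 < s -> 0 <= A * s -> A * s <= c * g ->
  e <= L / 2 * s ^ 2 -> L * g < A ^ 2 -> e < c ^ 2 * g / 2.
Proof.
  intros Hg Hs HAs0 HAs He HL.
  assert (2 * g * e <= L * g * s ^ 2) by nra.
  assert (L * g * s ^ 2 < (A * s) ^ 2)
    by (replace ((A * s) ^ 2) with (A ^ 2 * s ^ 2) by ring;
        apply Rmult_lt_compat_r; [apply pow_lt |]; lra).
  assert ((A * s) ^ 2 <= (c * g) ^ 2) by (apply pow_incr; lra).
  apply Rmult_lt_reg_l with (2 * g); [lra |].
  replace (2 * g * (c ^ 2 * g / 2)) with ((c * g) ^ 2) by field. lra.
Qed.

Section DampedNewtonStep.

Context {f df : R -> R} {R0 kappa lambda : R}.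
Hypothesis hD : has_derivative_on_0R f df R0.
Hypothesis hcont : continuous_on_0R df R0.
Hypothesis hdf0 : df 0 = -1.
Hypothesis hmono : strictly_increasing_on_0R df R0.
Hypothesis hconv : convex_on_0R df R0.
Hypothesis hkappa : is_lub (fun y => exists t, 0 < t < R0 /\ y = - f t / t) kappa.
Hypothesis hlambda : is_lub (fun s => 0 <= s < R0 /\ kappa + df s < 0) lambda.
Hypothesis hkappa0 : 0 < kappa.

Variables theta t eps : R.
Hypothesis htheta : 0 <= theta.
Hypothesis htheta_kappa : theta * (2 - kappa) <= kappa.
Hypothesis hOm : Omega f kappa lambda t eps.

Let g := f t + eps.
Let s := (1 + theta) * g / - df t.

Lemma df_bounds_on_Omega : -1 <= df t < - kappa.
Proof.
  destruct hOm as [Ht _]. pose proof (lambda_le_R0 hlambda). split.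
  - rewrite <- hdf0. apply (df_le hmono); lra.
  - pose proof (kappa_add_df_neg hmono hlambda t Ht). lra.
Qed.

Lemma newton_increment_ge : (1 + theta) * g <= s.
Proof.
  destruct hOm as [_ [_ Hg]]. pose proof df_bounds_on_Omega.
  apply Rmult_le_reg_r with (- df t); [lra |].
  unfold s. replace ((1 + theta) * g / - df t * - df t) with ((1 + theta) * g)
    by (field; lra).
  fold g in Hg. rewrite <- (Rmult_1_r ((1 + theta) * g)) at 2.
  apply Rmult_le_compat_l; [nra | lra].
Qed.

Lemma newton_increment_pos : 0 < s.
Proof.
  destruct hOm as [_ [_ Hg]]. fold g in Hg. pose proof newton_increment_ge. nra.
Qed.

Lemma newton_increment_le : (- kappa - df t) * s <= (1 - theta) * g.
Proof.
  destruct hOm as [_ [_ Hg]]. pose proof df_bounds_on_Omega.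
  apply (damped_step_le kappa); [lra | unfold g; lra | lra | exact htheta_kappa | nra].
Qed.

(* The line through [(t, g)] with slope [kappa + df t] vanishes at this point. *)
Lemma tangent_root_lt_lambda : t + g / (- kappa - df t) < lambda.
Proof.
  destruct hOm as [Ht [[_ Heps] _]]. pose proof df_bounds_on_Omega.
  pose proof (f_add_kappa_lt_before_lambda hkappa hD hmono hlambda hcont t Ht).
  assert (g / (- kappa - df t) < lambda - t); [| lra].
  apply Rmult_lt_reg_r with (- kappa - df t); [lra |].
  replace (g / (- kappa - df t) * (- kappa - df t)) with g by (field; lra).
  unfold g. nra.
Qed.

Lemma newton_increment_le_tangent_root : s <= g / (- kappa - df t).
Proof.
  pose proof df_bounds_on_Omega. pose proof newton_increment_le.
  pose proof newton_increment_pos. destruct hOm as [_ [_ Hg]]. fold g in Hg.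
  apply Rmult_le_reg_r with (- kappa - df t); [lra |].
  replace (g / (- kappa - df t) * (- kappa - df t)) with g by (field; lra). nra.
Qed.

Lemma newton_iterate_lt_lambda : t + s < lambda.
Proof.
  pose proof newton_increment_le_tangent_root. pose proof tangent_root_lt_lambda. lra.
Qed.

Lemma newton_residual_pos : 0 < f (t + s) - f t - df t * s.
Proof.
  destruct hOm as [[Ht _] _]. pose proof (lambda_le_R0 hlambda).
  pose proof newton_increment_pos. pose proof newton_iterate_lt_lambda.
  pose proof (tangent_lt hD hmono t (t + s) Ht ltac:(lra) ltac:(lra)).
  replace (t + s - t) with s in * by ring. lra.
Qed.

Lemma newton_residual_lt : f (t + s) - f t - df t * s < (1 - theta) ^ 2 * g / 2.
Proof.
  destruct hOm as [[Ht _] [_ Hg]]. fold g in Hg.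
  pose proof df_bounds_on_Omega. pose proof (lambda_le_R0 hlambda).
  pose proof newton_increment_pos. pose proof newton_increment_le_tangent_root.
  pose proof tangent_root_lt_lambda.
  set (A := - kappa - df t) in *. set (v := t + g / A) in *.
  assert (HA : 0 < A) by (unfold A; lra).
  assert (t + s <= v) by (unfold v; lra).
  pose proof (tangent_gap_le_chord hD hconv t v (t + s) Ht ltac:(lra) ltac:(lra)
                ltac:(lra)) as Hgap.
  replace (t + s - t) with s in Hgap by ring.
  pose proof (kappa_add_df_neg hmono hlambda v ltac:(lra)).
  apply (parabola_bound_lt _ ((df v - df t) / (v - t)) A s); try assumption.
  - apply Rmult_le_pos; lra.
  - exact newton_increment_le.
  - replace ((df v - df t) / (v - t) * g) with ((df v - df t) * A)
      by (unfold v; field; lra).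
    assert (df v - df t < A) by (unfold A; lra). nra.
Qed.

Lemma damped_newton_step :
  let ep := eps + 2 * theta * g in
  Omega f kappa lambda (t + s) ep /\ t < t + s /\ eps <= ep /\
  f (t + s) + ep < ((1 + theta ^ 2) / 2) * g.
Proof.
  intros ep. pose proof df_bounds_on_Omega. pose proof newton_increment_ge.
  pose proof newton_increment_pos. pose proof newton_iterate_lt_lambda.
  pose proof newton_residual_pos. pose proof newton_residual_lt.
  destruct hOm as [[Ht _] [[Heps Hepsk] Hg]]. fold g in Hg.
  assert (Hds : df t * s = - ((1 + theta) * g)) by (unfold s; field; lra).
  assert (Hfep : f (t + s) + ep = theta * g + (f (t + s) - f t - df t * s))
    by (rewrite Hds; unfold ep, g; ring).
  assert (Hep : eps <= ep) by (unfold ep; nra).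
  split; [| split; [lra | split; [exact Hep |]]].
  - split; [split; lra | split; [split; [lra |] |]].
    + assert (2 * theta * g <= kappa * ((1 + theta) * g)) by nra.
      unfold ep. nra.
    + rewrite Hfep. nra.
  - rewrite Hfep.
    replace ((1 + theta ^ 2) / 2 * g) with (theta * g + (1 - theta) ^ 2 * g / 2) by field.
    lra.
Qed.

End DampedNewtonStep.

Theorem lemma4p2 (R0 : R) (f df : R -> R)
  (hC1 : C1_on_0R f df R0)
  (h1a : f 0 > 0) (h1b : df 0 = -1)
  (h2a : strictly_increasing_on_0R df R0) (h2b : convex_on_0R df R0)
  (h3 : exists t, 0 < t < R0 /\ f t < 0)
  (kappa : R)
  (hkappa : is_lub (fun y => exists t, 0 < t < R0 /\ y = - f t / t) kappa)
  (lambda : R)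
  (hlambda : is_lub (fun s => 0 <= s < R0 /\ kappa + df s < 0) lambda)
  (theta t eps : R)
  (htheta : 0 <= theta <= kappa / (2 - kappa))
  (hOm : Omega f kappa lambda t eps) :
  let tp := t - (1 + theta) * (f t + eps) / df t in
  let ep := eps + 2 * theta * (f t + eps) in
  Omega f kappa lambda tp ep /\ t < tp /\ eps <= ep /\
  f tp + ep < ((1 + theta ^ 2) / 2) * (f t + eps).
Proof.
  intros tp ep. destruct hC1 as [hD hcont].
  pose proof (kappa_pos hkappa h3) as Hk.
  pose proof (mul_two_sub_le_of_le_div kappa theta htheta) as Htheta.
  pose proof (df_bounds_on_Omega h1b h2a hlambda t eps hOm) as Hdf.
  assert (Htp : tp = t + (1 + theta) * (f t + eps) / - df t)
    by (unfold tp; field; lra).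
  rewrite Htp.
  exact (damped_newton_step hD hcont h1b h2a h2b hkappa hlambda Hk theta t eps
           (proj1 htheta) Htheta hOm).
Qed.
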